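(* Let $(F,d)$ be a $\sigma$-compact metric space whose Borel $\sigma$-algebra makes it a standard Borel space, and let $\mathcal{N}$ be a Radon measure on $F$. Let $R>0$ and let $p\in L^1_{\mathcal{N}}$ be continuous. Let $\hat y$ lie in the interior of $\mathrm{Supp}(\mathcal{N})$, and assume $y\mapsto\exp(-a\,d_R^2(y,\hat y))\in L^1_{\mathcal{N}}$ for every $a>0$. Then $$\int_F\frac{e^{-a\,d_R(y,\hat y)^2}}{\int_F e^{-a\,d(y',\hat y)^2}\,d\mathcal{N}(y')}\,p(y)\,d\mathcal{N}(y)\xrightarrow[a\to\infty]{}p(\hat y).$$
   Context: $d_R=\min(d,R)$. $\mathrm{Supp}(\mathcal{N})$ is the complement of the union of all $\mathcal{N}$-null open sets. *)

From Stdlib Require List.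
From HB Require Import structures.
From mathcomp Require Import all_boot all_order all_algebra.
From mathcomp Require Import all_classical all_reals all_analysis.
Set Implicit Arguments. Unset Strict Implicit. Unset Printing Implicit Defensive.
Import Order.TTheory GRing.Theory Num.Theory.
Local Open Scope classical_set_scope.
Local Open Scope ring_scope.

Section MetricDefs.
Context {R : realType} {T : Type}.

Definition is_metric (e : T -> T -> R) : Prop :=
  [/\ forall x y, 0 <= e x y,
      forall x y, e x y = 0 <-> x = y,
      forall x y, e x y = e y x &
      forall x y z, e x z <= e x y + e y z].

Definition mball (e : T -> T -> R) (x : T) (r : R) : set T :=
  [set y | e x y < r].

Definition mopen (e : T -> T -> R) (A : set T) : Prop :=
  forall x, A x -> exists2 r : R, 0 < r & mball e x r `<=` A.

Definition mcompact (e : T -> T -> R) (K : set T) : Prop :=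
  forall (I : Type) (U : I -> set T), (forall i, mopen e (U i)) ->
    K `<=` \bigcup_i U i ->
    exists s : seq I, forall x, K x -> exists2 i, List.In i s & U i x.

Definition sigma_compact (e : T -> T -> R) : Prop :=
  exists K : nat -> set T, (forall n, mcompact e (K n)) /\ \bigcup_n K n = setT.

Definition mseparable (e : T -> T -> R) : Prop :=
  exists D : set T, countable D /\
    forall x r, 0 < r -> exists2 y, D y & e x y < r.

Definition mcomplete (e : T -> T -> R) : Prop :=
  forall u : nat -> T,
    (forall eps, 0 < eps -> exists N, forall m n, (N <= m)%N -> (N <= n)%N ->
        e (u m) (u n) < eps) ->
    exists l, forall eps, 0 < eps -> exists N, forall n, (N <= n)%N -> e (u n) l < eps.

Definition mcontinuous (e : T -> T -> R) (f : T -> R) : Prop :=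
  forall x eps, 0 < eps -> exists2 delta, 0 < delta &
    forall y, e x y < delta -> `|f y - f x| < eps.

Definition minterior (e : T -> T -> R) (A : set T) : set T :=
  [set x | exists2 r, 0 < r & mball e x r `<=` A].

End MetricDefs.

Section MeasDefs.
Context {d : measure_display} {F : measurableType d} {R : realType}.

Definition borel_of (e : F -> F -> R) : Prop :=
  (@measurable d F) = <<s mopen e >>.

(* standard Borel space: the sigma-algebra is the Borel sigma-algebra of
   some Polish (complete separable metric) topology on F *)
Definition standard_borel : Prop :=
  exists e : F -> F -> R,
    [/\ is_metric e, mcomplete e, mseparable e & borel_of e].

Definition radon (e : F -> F -> R) (N : {measure set F -> \bar R}) : Prop :=
  (forall x, exists2 r, 0 < r & (N (mball e x r) < +oo)%E) /\
  (forall A, measurable A ->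
     N A = ereal_sup [set N K | K in [set K | mcompact e K /\ K `<=` A]]).

Definition supp (e : F -> F -> R) (N : {measure set F -> \bar R}) : set F :=
  ~` \bigcup_(U in [set U | mopen e U /\ N U = 0%E]) U.

End MeasDefs.

(* Write D(a) for the integral of exp(-a d(y,ŷ)^2), so that u_a := exp(-a d(.,ŷ)^2) / D(a)
   is a probability density and p(ŷ) = ∫ p(ŷ) u_a.  Fix δ <= R with |p - p(ŷ)| <= ε on the
   ball {d < δ}.  On that ball the truncated and untruncated kernels are equal; off it both,
   divided by D(a), are at most exp(-a δ^2) / D(a).  Since ŷ is interior to the support,
   m := N{d < δ/2} > 0 and D(a) >= exp(-a δ^2/4) m, so this off-ball weight is at most
   exp(-3aδ^2/4) / m -> 0. *)

From mathcomp Require Import all_boot all_order all_algebra.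
From mathcomp Require Import all_classical all_reals all_analysis.
From mathcomp Require Import ring lra measurable_realfun.
Import Order.TTheory GRing.Theory Num.Theory.
Local Open Scope classical_set_scope.
Local Open Scope ring_scope.

Set Implicit Arguments.
Unset Strict Implicit.
Unset Printing Implicit Defensive.

Section MetricFacts.
Context {R : realType} {T : Type} (e : T -> T -> R).
Hypothesis e_metric : is_metric e.

Lemma metric_refl x : e x x = 0.
Proof. by case: e_metric => _ eq0 _ _; apply/eq0. Qed.

Lemma mball_center x r : 0 < r -> mball e x r x.
Proof. by rewrite /mball /= metric_refl. Qed.

Lemma mopen_mball x r : mopen e (mball e x r).
Proof.
case: e_metric => _ _ _ tri y; rewrite /mball /= => xy.
exists (r - e x y); first by rewrite subr_gt0.
by move=> z /= yz; have := tri x y z; lra.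
Qed.

Lemma mcontinuous_dist z : mcontinuous e (e ^~ z).
Proof.
case: e_metric => _ _ sym tri x eps eps0; exists eps => // y xy.
by rewrite ltr_norml; have := tri x y z; have := tri y x z; rewrite (sym y x); lra.
Qed.

End MetricFacts.

Section BorelFacts.
Context {d : measure_display} {F : measurableType d} {R : realType}.
Variable e : F -> F -> R.
Hypothesis e_borel : borel_of e.

Lemma mopen_measurable A : mopen e A -> measurable A.
Proof. by rewrite e_borel => oA; apply: sub_sigma_algebra. Qed.

Lemma mcontinuous_measurable_fun f : mcontinuous e f -> measurable_fun setT f.
Proof.
move=> fc; apply: (measurability _ (RGenOpens.measurableE R)).
move=> _ [_ [a [b ->]] <-]; apply: mopen_measurable => x [_ /=].
rewrite in_itv /= => /andP[ax xb].
have [dl dl0 near_x] := fc x (Num.min (f x - a) (b - f x))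
  ltac:(by rewrite lt_min !subr_gt0 ax xb).
exists dl => // y /near_x; rewrite lt_min !ltr_norml => /andP[/andP[? ?] /andP[? ?]].
by split => //=; rewrite in_itv /=; apply/andP; split; lra.
Qed.

End BorelFacts.

Lemma minterior_supp_mball_gt0 {d : measure_display} {F : measurableType d}
    {R : realType} (e : F -> F -> R) (N : {measure set F -> \bar R}) x r :
  is_metric e -> minterior e (supp e N) x -> 0 < r -> (0 < N (mball e x r))%E.
Proof.
move=> e_metric [s s0 ball_supp] r0; rewrite lt0e measure_ge0 andbT.
apply/eqP => null_ball; apply: (ball_supp x); first exact: mball_center.
by exists (mball e x r); [split => //; apply: mopen_mball | apply: mball_center].
Qed.

Lemma normB_near_far_le {R : realDomainType} (u w x x0 eps K : R) :
  0 <= u -> 0 <= w -> 0 <= eps -> 0 <= K ->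
  (w = u /\ `|x - x0| <= eps) \/ (u <= K /\ w <= K) ->
  `|x0 * u - w * x| <= eps * u + K * (`|x| + `|x0|).
Proof.
move=> u0 w0 eps0 K0 [[-> near]|[uK wK]].
- rewrite [u * x]mulrC -mulrBl normrM (ger0_norm u0) distrC.
  have : 0 <= K * (`|x| + `|x0|) by rewrite mulr_ge0 ?addr_ge0.
  by have := ler_wpM2r u0 near; lra.
- apply: le_trans (ler_normB _ _) _; rewrite !normrM (ger0_norm u0) (ger0_norm w0).
  have := ler_wpM2r (normr_ge0 x0) uK; have := ler_wpM2l (normr_ge0 x) wK.
  have := mulr_ge0 eps0 u0; lra.
Qed.

Section FiniteMeasure.
Context {d : measure_display} {F : measurableType d} {R : realType}.
Variable N : {measure set F -> \bar R}.

Lemma measureT_lty_of_integrable (f : F -> R) c :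
  0 < c -> (forall y, c <= f y) -> N.-integrable setT (EFin \o f) ->
  (N setT < +oo)%E.
Proof.
move=> c0 cf /integrableP[mf /(le_lt_trans _)-cN_lty].
have {cN_lty} : (c%:E * N setT < +oo)%E.
  apply: cN_lty; rewrite -integral_cst //; apply: ge0_le_integral => //.
  - by move=> *; rewrite lee_fin ltW.
  - by apply: measurableT_comp => //; apply: abse_measurable.
  - by move=> y _ /=; rewrite lee_fin ger0_norm ?cf // (le_trans (ltW c0)).
case: (N setT) => [r _| |] //; [exact: ltry | by rewrite gt0_muley ?lte_fin].
Qed.

Lemma bounded_fun_norm_le (f : F -> R) M :
  (forall y, `|f y| <= M) -> [bounded f y | y in setT].
Proof.
move=> fM; exists M; split; first exact: num_real.
by move=> M' M'M y _; apply: le_trans (fM y) (ltW M'M).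
Qed.

Lemma integrableM_bounded (g f : F -> R) M :
  measurable_fun setT g -> (forall y, `|g y| <= M) ->
  N.-integrable setT (EFin \o f) -> N.-integrable setT (EFin \o (fun y => g y * f y)).
Proof.
move=> mg /bounded_fun_norm_le gM /integrableMl-/(_ measurableT _ mg gM).
by apply: eq_integrable => // y _; rewrite /= mulrC.
Qed.

Hypothesis N_fin : (N setT < +oo)%E.

Lemma integrable_bounded (f : F -> R) M :
  measurable_fun setT f -> (forall y, `|f y| <= M) -> N.-integrable setT (EFin \o f).
Proof.
by move=> mf /bounded_fun_norm_le fM; apply: measurable_bounded_integrable.
Qed.

Lemma Rintegral_approx_identity (u w p : F -> R) (x0 eps K M : R) :
  measurable_fun setT u -> measurable_fun setT w ->
  (forall y, 0 <= u y <= M) -> (forall y, 0 <= w y <= M) ->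
  N.-integrable setT (EFin \o p) -> Rintegral N setT u = 1 ->
  0 <= eps -> 0 <= K ->
  (forall y, (w y = u y /\ `|p y - x0| <= eps) \/ (u y <= K /\ w y <= K)) ->
  `|x0 - Rintegral N setT (fun y => w y * p y)| <=
    eps + K * (Rintegral N setT (fun y => `|p y|) + `|x0| * fine (N setT)).
Proof.
move=> mu mw uM wM ip u1 eps0 K0 near_far.
have bound_norm (f : F -> R) y : 0 <= f y <= M -> `|f y| <= M.
  by case/andP=> f0 fM; rewrite ger0_norm.
have iu := integrable_bounded mu (fun y => bound_norm _ _ (uM y)).
have iwp := integrableM_bounded mw (fun y => bound_norm _ _ (wM y)) ip.
have ix0u := integrableM_bounded (measurable_cst x0) (fun _ => lexx `|x0|) iu.
have ip_norm := integrable_norm ip.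
have ic := integrable_bounded (measurable_cst `|x0|) (fun _ => lexx `| `|x0| |).
have ipx0 := integrableD measurableT ip_norm ic.
have ieu := integrableM_bounded (measurable_cst eps) (fun _ => lexx `|eps|) iu.
have iKp := integrableM_bounded (measurable_cst K) (fun _ => lexx `|K|) ipx0.
rewrite -{1}(mulr1 x0) -u1 -RintegralZl // -RintegralB //.
have ix0u_wp := integrableB measurableT ix0u iwp.
apply: le_trans (le_normr_Rintegral _ ix0u_wp) _ => //.
apply: le_trans (le_Rintegral _ (integrable_norm ix0u_wp) (integrableD measurableT ieu iKp) _) _ => //.
  move=> y _; have /andP[u0 _] := uM y; have /andP[w0 _] := wM y.
  exact: normB_near_far_le.
by rewrite RintegralD // !RintegralZl // u1 mulr1 RintegralD // Rintegral_cst.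
Qed.

End FiniteMeasure.

Lemma expR_Nsqr_le {R : realType} (a s x : R) :
  0 <= a -> 0 <= s <= x -> expR (- a * x ^+ 2) <= expR (- a * s ^+ 2).
Proof.
move=> a0 /andP[s0 sx]; rewrite ler_expR !mulNr lerN2 ler_wpM2l //.
by rewrite ler_sqr ?nnegrE // (le_trans s0).
Qed.

Lemma expR_Nsqr_le1 {R : realType} (a x : R) : 0 <= a -> expR (- a * x ^+ 2) <= 1.
Proof. by move=> a0; rewrite expR_le1 mulNr oppr_le0 mulr_ge0 ?sqr_ge0. Qed.

Section GaussianKernel.
Context {d : measure_display} {F : measurableType d} {R : realType}.
Variables (N : {measure set F -> \bar R}) (r : F -> R) (Rad : R).
Hypotheses (r_ge0 : forall y, 0 <= r y) (mr : measurable_fun setT r).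
Hypothesis N_fin : (N setT < +oo)%E.

Definition gauss a y := expR (- a * r y ^+ 2).
Definition gauss_trunc a y := expR (- a * Num.min (r y) Rad ^+ 2).
Definition gauss_mass a := Rintegral N setT (gauss a).

Lemma measurable_gauss a : measurable_fun setT (gauss a).
Proof.
by apply: measurableT_comp => //; apply: measurable_funM => //; apply: measurable_funX.
Qed.

Lemma measurable_gauss_trunc a : measurable_fun setT (gauss_trunc a).
Proof.
apply: measurableT_comp => //; apply: measurable_funM => //; apply: measurable_funX.
exact: measurable_minr.
Qed.

Lemma gauss_near_far a δ y : 0 <= a -> 0 <= δ <= Rad ->
  (r y < δ /\ gauss_trunc a y = gauss a y) \/
  (gauss a y <= expR (- a * δ ^+ 2) /\ gauss_trunc a y <= expR (- a * δ ^+ 2)).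
Proof.
move=> a0 /andP[δ0 δRad]; have [ry_lt|δ_le] := ltP (r y) δ.
  left; split => //; rewrite /gauss_trunc min_l //; exact: ltW (lt_le_trans ry_lt δRad).
by right; split; apply: expR_Nsqr_le; rewrite // δ0 // le_min δ_le.
Qed.

Lemma measurable_sublevel s : measurable (r @^-1` `]-oo, s[).
Proof. by rewrite -[X in measurable X]setTI; exact: mr. Qed.

Lemma integrable_gauss a : 0 <= a -> N.-integrable setT (EFin \o gauss a).
Proof.
move=> a0; apply: (integrable_bounded (M := 1) N_fin (measurable_gauss a)) => y.
by rewrite ger0_norm ?expR_ge0 ?expR_Nsqr_le1.
Qed.

Lemma sublevel_fine_gt0 s : (0 < N (r @^-1` `]-oo, s[))%E -> 0 < fine (N (r @^-1` `]-oo, s[)).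
Proof.
move=> Nball_gt0; apply: fine_gt0; rewrite Nball_gt0 (le_lt_trans _ N_fin) //.
by apply: le_measure; rewrite ?inE //; apply: measurable_sublevel.
Qed.

Lemma gauss_mass_ge a s : 0 <= a -> 0 <= s ->
  expR (- a * s ^+ 2) * fine (N (r @^-1` `]-oo, s[)) <= gauss_mass a.
Proof.
move=> a0 s0; set B := r @^-1` `]-oo, s[.
have mB : measurable B := measurable_sublevel s.
have i1B : N.-integrable setT (EFin \o \1_B).
  apply: (integrable_bounded (M := 1) N_fin (measurable_indic mB)) => y.
  by rewrite indicE; case: (_ \in _); rewrite ?normr1 ?normr0.
have -> : fine (N B) = Rintegral N setT \1_B by rewrite /Rintegral integral_indic ?setIT.
rewrite -RintegralZl //; apply: le_Rintegral => //.
- exact: integrableM_bounded (measurable_cst _) (fun _ => lexx `|expR (- a * s ^+ 2)|) i1B.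
- exact: integrable_gauss.
move=> y _; case: (boolP (y \in B)) => [/set_mem|_]; last first.
  by rewrite mulr0 expR_ge0.
by rewrite /B /= in_itv /= mulr1 => ry_lt; apply: expR_Nsqr_le; rewrite // r_ge0 ltW.
Qed.

Lemma gauss_mass_gt0 a s : 0 <= a -> 0 <= s -> (0 < N (r @^-1` `]-oo, s[))%E ->
  0 < gauss_mass a.
Proof.
move=> a0 s0 Nball_gt0; apply: lt_le_trans (gauss_mass_ge a0 s0).
by rewrite mulr_gt0 ?expR_gt0 ?sublevel_fine_gt0.
Qed.

Lemma integrable_gauss_trunc_mul a c (p : F -> R) : 0 <= a ->
  N.-integrable setT (EFin \o p) ->
  N.-integrable setT (EFin \o (fun y => gauss_trunc a y * c * p y)).
Proof.
move=> a0 ip; apply: (integrableM_bounded (M := `|c|)) ip => [|y].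
  exact: measurable_funM (measurable_gauss_trunc a) (measurable_cst c).
by rewrite normrM ler_piMl // ger0_norm ?expR_ge0 // expR_Nsqr_le1.
Qed.

Lemma far_weight_cvg0 (δ : R) : 0 < δ -> (0 < N (r @^-1` `]-oo, (δ / 2)%R[))%E ->
  (fun a => expR (- a * δ ^+ 2) / gauss_mass a) @ +oo --> 0.
Proof.
move=> δ0 Nball_gt0; set m := fine (N (r @^-1` `]-oo, δ / 2[)).
have m0 : 0 < m := sublevel_fine_gt0 Nball_gt0.
pose c := δ ^+ 2 - (δ / 2) ^+ 2.
have c0 : 0 < c by rewrite /c; nra.
apply/cvgrPdist_le => eta eta0; near=> a.
have a0 : 0 < a by near: a; exact: nbhs_pinfty_gt (num_real _).
have a_big : (m * c * eta)^-1 < a by near: a; exact: nbhs_pinfty_gt (num_real _).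
pose E := expR (- a * (δ / 2) ^+ 2).
have mass_ge : E * m <= gauss_mass a by apply: gauss_mass_ge; rewrite ?ltW ?divr_gt0.
have mass_gt0 : 0 < gauss_mass a.
  by apply: lt_le_trans mass_ge; rewrite mulr_gt0 ?expR_gt0.
have split_exp : expR (- a * δ ^+ 2) * expR (a * c) = E.
  by rewrite -expRD; congr expR; rewrite /c; ring.
have exp_big : 1 <= eta * m * expR (a * c).
  have mce0 : 0 < m * c * eta by rewrite !mulr_gt0.
  move: a_big; rewrite -(ltr_pM2r mce0) mulVf ?gt_eqF // => a_big.
  have := ler_wpM2l (ltW (mulr_gt0 eta0 m0)) (expR_ge1Dx (a * c)).
  have := mulr_gt0 eta0 m0; nra.
rewrite sub0r normrN ger0_norm; last by rewrite divr_ge0 ?expR_ge0 // ltW.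
rewrite ler_pdivrMr //.
apply: (@le_trans _ _ (expR (- a * δ ^+ 2) * (eta * m * expR (a * c)))).
  by rewrite ler_peMr ?expR_ge0.
by rewrite mulrCA split_exp -mulrA ler_pM2l // mulrC.
Unshelve. all: by end_near.
Qed.

Lemma gauss_trunc_estimate (p : F -> R) x0 a δ eps :
  0 < a -> 0 <= δ <= Rad -> 0 <= eps -> 0 < gauss_mass a ->
  N.-integrable setT (EFin \o p) -> (forall y, r y < δ -> `|p y - x0| <= eps) ->
  `|x0 - Rintegral N setT (fun y => gauss_trunc a y / gauss_mass a * p y)| <=
    eps + expR (- a * δ ^+ 2) / gauss_mass a *
      (Rintegral N setT (fun y => `|p y|) + `|x0| * fine (N setT)).
Proof.
move=> a0 δ_itv eps0; set D := gauss_mass a => D0 ip p_near.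
have normalized (f : F -> R) y : 0 <= f y <= 1 -> 0 <= f y / D <= D^-1.
  by case/andP=> f0 f1; rewrite divr_ge0 ?ler_piMl ?invr_ge0 // ltW.
apply: (Rintegral_approx_identity N_fin (u := fun y => gauss a y / D) (M := D^-1)).
- exact: measurable_funM (measurable_gauss a) (measurable_cst _).
- exact: measurable_funM (measurable_gauss_trunc a) (measurable_cst _).
- by move=> y; apply: normalized; rewrite expR_ge0 expR_Nsqr_le1 ?ltW.
- by move=> y; apply: normalized; rewrite expR_ge0 expR_Nsqr_le1 ?ltW.
- by [].
- by rewrite RintegralZr ?divff ?gt_eqF //; apply: integrable_gauss; rewrite ltW.
- by [].
- by rewrite divr_ge0 ?expR_ge0 ?ltW.
move=> y; have [[ry_lt ->]|[far far_trunc]] := gauss_near_far y (ltW a0) δ_itv.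
  by left; split => //; apply: p_near.
by right; split; rewrite ler_pM2r ?invr_gt0.
Qed.

Lemma gauss_trunc_cvg (p : F -> R) x0 : 0 < Rad -> N.-integrable setT (EFin \o p) ->
  (forall eps, 0 < eps -> exists2 δ, 0 < δ & forall y, r y < δ -> `|p y - x0| <= eps) ->
  (forall s, 0 < s -> (0 < N (r @^-1` `]-oo, s[))%E) ->
  (fun a => Rintegral N setT (fun y => gauss_trunc a y / gauss_mass a * p y)) @ +oo --> x0.
Proof.
move=> Rad0 ip p_cont Nball_gt0; apply/cvgrPdist_le => eps eps0.
have [δ0 δ0_gt0 p_near] := p_cont (eps / 2) ltac:(by rewrite divr_gt0).
pose δ := Num.min δ0 Rad.
have δ_gt0 : 0 < δ by rewrite lt_min δ0_gt0.
pose C := Rintegral N setT (fun y => `|p y|) + `|x0| * fine (N setT).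
have C0 : 0 <= C.
  apply: addr_ge0; first by apply: Rintegral_ge0 => y _; apply: normr_ge0.
  by rewrite mulr_ge0 ?fine_ge0 ?measure_ge0.
have eps_C : 0 < eps / 2 / (C + 1) by rewrite divr_gt0 ?divr_gt0 // ltr_wpDl.
have K_cvg0 := far_weight_cvg0 δ_gt0 (Nball_gt0 (δ / 2) ltac:(by rewrite divr_gt0)).
near=> a.
have a0 : 0 < a by near: a; exact: nbhs_pinfty_gt (num_real _).
have K_small : `|expR (- a * δ ^+ 2) / gauss_mass a| <= eps / 2 / (C + 1).
  by near: a; exact: (cvgr0_norm_le _ K_cvg0 _ eps_C).
apply: le_trans (gauss_trunc_estimate (δ := δ) (eps := eps / 2) a0 _ _ _ ip _) _.
- by rewrite ltW //= ge_min lexx orbT.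
- by rewrite divr_ge0 ?ltW.
- exact: gauss_mass_gt0 (ltW a0) (ltW δ_gt0) (Nball_gt0 _ δ_gt0).
- by move=> y ry_lt; apply/p_near/(lt_le_trans ry_lt); rewrite ge_min lexx.
rewrite -/C; set K := _ / gauss_mass a.
have : K * C <= eps / 2 / (C + 1) * C.
  by apply: ler_wpM2r => //; apply: le_trans (ler_norm _) K_small.
have : eps / 2 / (C + 1) * C <= eps / 2.
  by rewrite mulrAC ler_pdivrMr ?ltr_wpDl // ler_pM2l ?divr_gt0 // lerDl.
lra.
Unshelve. all: by end_near.
Qed.

End GaussianKernel.

Theorem lemmaB2 (R : realType) (dsp : measure_display) (F : measurableType dsp)
  (dist : F -> F -> R)
  (Hmetric : is_metric dist)
  (Hsigma : sigma_compact dist)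
  (Hborel : borel_of dist)
  (Hstd : standard_borel (F := F) (R := R))
  (N : {measure set F -> \bar R})
  (Hradon : radon dist N)
  (Rad : R) (HR : 0 < Rad)
  (p : F -> R)
  (Hp1 : N.-integrable setT (fun y => (p y)%:E))
  (Hpc : mcontinuous dist p)
  (yhat : F)
  (Hyhat : minterior dist (supp dist N) yhat)
  (Hexp : forall a : R, 0 < a ->
     N.-integrable setT (fun y => (expR (- a * (Num.min (dist y yhat) Rad) ^+ 2))%:E)) :
  (fun a : R =>
     (\int[N]_y ((expR (- a * (Num.min (dist y yhat) Rad) ^+ 2)
                 / Rintegral N setT (fun y' => expR (- a * (dist y' yhat) ^+ 2)))
                * p y)%:E)%E)
    @ +oo --> (p yhat)%:E.
Proof.
have [dist_ge0 _ dist_sym _] := Hmetric.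
pose r y := dist y yhat.
have mr : measurable_fun setT r :=
  mcontinuous_measurable_fun Hborel (mcontinuous_dist Hmetric yhat).
have N_fin : (N setT < +oo)%E.
  apply: (measureT_lty_of_integrable (c := expR (- 1 * Rad ^+ 2)) _ _ (Hexp 1 ltr01)) => [|y].
    exact: expR_gt0.
  by apply: expR_Nsqr_le; rewrite ?ler01 // le_min dist_ge0 ltW //= ge_min lexx orbT.
have sublevel_mball s : r @^-1` `]-oo, s[ = mball dist yhat s.
  by apply/seteqP; split => y /=; rewrite in_itv /= /r dist_sym.
have p_cont eps : 0 < eps -> exists2 δ, 0 < δ & forall y, r y < δ -> `|p y - p yhat| <= eps.
  move=> eps0; have [δ δ0 p_near] := Hpc yhat eps eps0.
  by exists δ => // y ry; apply/ltW/p_near; rewrite dist_sym.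
have Nball_gt0 s : 0 < s -> (0 < N (r @^-1` `]-oo, s[))%E.
  by move=> s0; rewrite sublevel_mball; apply: minterior_supp_mball_gt0.
apply: cvg_EFin (gauss_trunc_cvg (fun y => dist_ge0 y yhat) mr N_fin HR Hp1 p_cont Nball_gt0).
near=> a; have a0 : 0 <= a by near: a; exact: nbhs_pinfty_ge (num_real _).
by apply: integrable_fin_num => //; apply: integrable_gauss_trunc_mul.
Unshelve. all: by end_near.
Qed.
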